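(* Let $\mathbb F$ be an algebraically closed field and let $A=\sigma(\mathbb F)\langle x_1,\dots,x_n\rangle$ be a quasi-commutative bijective skew PBW extension of $\mathbb F$. Assume that the center $Z(A)$ is a polynomial ring in $n$ variables over $\mathbb F$, i.e. $Z(A)=\mathbb F[y_1,\dots,y_n]$ for some algebraically independent elements $y_1,\dots,y_n\in Z(A)$. Let $I$ be a two-sided ideal of $A$ and put $J:=I\cap Z(A)$ (the preimage of $I$ under the inclusion $Z(A)\hookrightarrow A$). Then $$\big\langle I_{Z(A)}(V_{Z(A)}(J))\big\rangle\subseteq\sqrt{I}\subseteq I(V(I)),$$ where $\langle\,\cdot\,\rangle$ denotes the two-sided ideal of $A$ generated by a subset.
   Context: Skew PBW extension: a ring $A$ is a skew PBW extension of a ring $R$, written $A=\sigma(R)\langle x_1,\dots,x_n\rangle$, if (1) $R\subseteq A$ is a subring; (2) there are $x_1,\dots,x_n\in A$ such that $A$ is a free left $R$-module with basis $\mathrm{Mon}(A)=\{x_1^{\alpha_1}\cdots x_n^{\alpha_n}:\alpha\in\mathbb N^n\}$; (3) for every $i$ and every $r\in R\setminus\{0\}$ there is $c_{i,r}\in R\setminus\{0\}$ with $x_ir-c_{i,r}x_i\in R$; (4) for every $i,j$ there is $c_{i,j}\in R\setminus\{0\}$ with $x_jx_i-c_{i,j}x_ix_j\in R+Rx_1+\cdots+Rx_n$. For each $i$ there are then an injective ring endomorphism $\sigma_i$ of $R$ and a $\sigma_i$-derivation $\delta_i$ with $x_ir=\sigma_i(r)x_i+\delta_i(r)$. $A$ is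 bijective if every $\sigma_i$ is bijective and every $c_{i,j}$ is invertible. $A$ is quasi-commutative if (3),(4) are replaced by: $x_ir=c_{i,r}x_i$ for some $c_{i,r}\in R\setminus\{0\}$, and $x_jx_i=c_{i,j}x_ix_j$ for some $c_{i,j}\in R\setminus\{0\}$. Roots, vanishing sets, ideals of points in $A$: for $Z=(z_1,\dots,z_n)\in\mathbb F^n$, $\langle Z\rangle$ is the two-sided ideal of $A$ generated by $x_1-z_1,\dots,x_n-z_n$; $f\in A$ has root $Z$ iff $f\in\langle Z\rangle$. $V(I)=\{Z\in\mathbb F^n: f\in\langle Z\rangle\ \forall f\in I\}$ and, for $X\subseteq\mathbb F^n$, $I(X)=\{g\in A: g\in\langle Z\rangle\ \forall Z\in X\}$. In the commutative polynomial ring $Z(A)=\mathbb F[y_1,\dots,y_n]$: $V_{Z(A)}(J)=\{a\in\mathbb F^n: g(a)=0\ \forall g\in J\}$ (classical evaluation, equivalently $g$ lies in the ideal generated by $y_1-a_1,\dots,y_n-a_n$), and for $X\subseteq\mathbb F^n$, $I_{Z(A)}(X)=\{g\in Z(A): g(a)=0\ \forall a\in X\}$. Radical: a proper two-sided ideal $P$ of a ring $S$ is prime if for all left ideals $L,K$ of $S$, $LK\subseteq P$ implies $L\subseteq P$ or $K\subseteq P$. For a two-sided ideal $I$ of $A$, $\sqrt{I}$ is the intersection of all prime ideals of $A$ containing $I$ (with $\sqrt{A}=A$). *)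

From HB Require Import structures.
From mathcomp Require Import all_boot all_order all_algebra.
From mathcomp Require Import mpoly.
Set Implicit Arguments. Unset Strict Implicit. Unset Printing Implicit Defensive.
Import GRing.Theory.
Local Open Scope ring_scope.

Section Ideals.
Variable A : nzRingType.

Definition subsetP (S T : A -> Prop) := forall a, S a -> T a.

Definition left_ideal (L : A -> Prop) :=
  [/\ L 0, (forall a b, L a -> L b -> L (a - b)) & (forall r a, L a -> L (r * a))].

Definition two_sided_ideal (P : A -> Prop) :=
  [/\ P 0, (forall a b, P a -> P b -> P (a - b)),
      (forall r a, P a -> P (r * a)) & (forall r a, P a -> P (a * r))].

Definition gen_ideal (S : A -> Prop) (a : A) : Prop :=
  forall P, two_sided_ideal P -> subsetP S P -> P a.

Definition ideal_prod (L K : A -> Prop) (a : A) : Prop :=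
  exists s : seq (A * A),
    (forall u, u \in s -> L u.1 /\ K u.2) /\ a = \sum_(u <- s) u.1 * u.2.

Definition prime_ideal (P : A -> Prop) :=
  [/\ two_sided_ideal P, ~ (forall a, P a) &
      forall L K, left_ideal L -> left_ideal K ->
        subsetP (ideal_prod L K) P -> subsetP L P \/ subsetP K P].

Definition radical (I : A -> Prop) (a : A) : Prop :=
  forall P, prime_ideal P -> subsetP I P -> P a.

Definition center (a : A) : Prop := forall b, a * b = b * a.

End Ideals.

Section SkewPBW.
Variables (F : fieldType) (A : nzRingType) (n : nat).
Variables (iota : {rmorphism F -> A}) (x : 'I_n -> A).

(* the element  \sum_alpha p_alpha x_1^alpha_1 ... x_n^alpha_n  of A
   (coefficients on the left, ordered monomials) *)
Definition lin_mon (p : {mpoly F[n]}) : A := mmap iota x p.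

Definition qc_bijective_skewPBW : Prop :=
  [/\ injective iota,
      (* A is a free left F-module with basis Mon(A) *)
      bijective lin_mon,
      (forall i (r : F), r != 0 ->
         exists2 c : F, c != 0 & x i * iota r = iota c * x i),
      (forall i j, exists2 c : F, (c != 0) && (c \is a GRing.unit) &
         x j * x i = iota c * (x i * x j)) &
      (forall i, exists2 sigma : F -> F,
         (forall r, x i * iota r = iota (sigma r) * x i) & bijective sigma)].

Definition point_ideal (z : 'I_n -> F) : A -> Prop :=
  gen_ideal (fun a => exists i, a = x i - iota (z i)).

Definition V_A (I : A -> Prop) (z : 'I_n -> F) : Prop :=
  forall f, I f -> point_ideal z f.

Definition I_A (X : ('I_n -> F) -> Prop) (g : A) : Prop :=
  forall z, X z -> point_ideal z g.

End SkewPBW.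

Section CenterPoly.
Variables (F : fieldType) (n : nat).

Definition V_Z (J : {mpoly F[n]} -> Prop) (a : 'I_n -> F) : Prop :=
  forall g, J g -> g.@[a] = 0.

Definition I_Z (X : ('I_n -> F) -> Prop) (g : {mpoly F[n]}) : Prop :=
  forall a, X a -> g.@[a] = 0.

End CenterPoly.

(* Second inclusion: since A is spanned by the monomials in x_1..x_n, every
   element is congruent modulo the ideal <Z> of a point Z to a scalar, so
   <Z> is either A or prime; when Z ∈ V(I) it contains I, hence sqrt I.

   First inclusion: it suffices that each central generator g(y) lies in
   every prime P ⊇ I.  The contraction of P to the center is a prime ideal
   of F[y_1..y_n] containing J (central factors behave commutatively in P).
   If it missed g, the Nullstellensatz would give a point z of V_Z(J) with
   g(z) ≠ 0, contradicting g ∈ I_Z(V_Z(J)). *)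

From Pilot Require Import Defs.
From HB Require Import structures.
From mathcomp Require Import all_boot all_order all_algebra.
From mathcomp Require Import mpoly.
From Stdlib Require Import Classical.
From mathcomp Require Import ring zify.
Set Implicit Arguments. Unset Strict Implicit. Unset Printing Implicit Defensive.
Import GRing.Theory.
Local Open Scope ring_scope.

(* A prime ideal of a commutative ring, possibly the whole ring: an ideal
   Q such that ab in Q forces a in Q or b in Q. *)
Definition cprime (R : comNzRingType) (Q : R -> Prop) :=
  [/\ Q 0, (forall a b, Q a -> Q b -> Q (a - b)),
      (forall r a, Q a -> Q (r * a)) & (forall a b, Q (a * b) -> Q a \/ Q b)].

Section CPrimeTheory.
Variables (R : comNzRingType) (Q : R -> Prop).
Hypothesis hQ : cprime Q.

Lemma cp0 : Q 0. Proof. by case: hQ. Qed.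
Lemma cpB a b : Q a -> Q b -> Q (a - b). Proof. by case: hQ => _ h _ _; apply: h. Qed.
Lemma cpM r a : Q a -> Q (r * a). Proof. by case: hQ => _ _ h _; apply: h. Qed.
Lemma cpMr r a : Q a -> Q (a * r). Proof. by rewrite mulrC; apply: cpM. Qed.
Lemma cpP a b : Q (a * b) -> Q a \/ Q b. Proof. by case: hQ => _ _ _ h; apply: h. Qed.

Lemma cpD a b : Q a -> Q b -> Q (a + b).
Proof.
move=> ha hb; rewrite -[b]opprK -[- b]sub0r.
by apply: cpB => //; apply: cpB => //; apply: cp0.
Qed.

Lemma cp_sum (I : Type) (s : seq I) (P : pred I) (f : I -> R) :
  (forall i, P i -> Q (f i)) -> Q (\sum_(i <- s | P i) f i).
Proof. by move=> h; apply: big_ind => //; [apply: cp0 | apply: cpD]. Qed.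

Lemma cpX a k : Q (a ^+ k) -> Q a.
Proof.
elim: k => [|k IH]; last by rewrite exprS => /cpP [] // /IH.
by rewrite expr0 => h1; rewrite -[a]mulr1; apply: cpM.
Qed.

End CPrimeTheory.

Lemma cprime_preimage (R S : comNzRingType) (f : {rmorphism R -> S}) (Q : S -> Prop) :
  cprime Q -> cprime (fun a => Q (f a)).
Proof.
move=> hQ; split.
- by rewrite rmorph0; apply: cp0.
- by move=> a b ha hb; rewrite rmorphB; apply: cpB.
- by move=> r a ha; rewrite rmorphM; apply: cpM.
- by move=> a b; rewrite rmorphM; apply: cpP.
Qed.

Lemma exists_minimal (T : Type) (m : T -> nat) (X : T -> Prop) :
  (exists t, X t) -> exists2 t, X t & forall u, (m u < m t)%N -> ~ X u.
Proof.
move=> [t Xt]; move: {2}(m t) (leqnn (m t)) => N.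
elim: N t Xt => [|N IH] t Xt le_tN.
  by exists t => // u; rewrite ltnNge (leq_trans le_tN).
have [[u [lt_ut Xu]]|no_smaller] := classic (exists u, (m u < m t)%N /\ X u).
  by apply: (IH u) => //; rewrite -ltnS (leq_trans lt_ut).
by exists t => // u lt_ut Xu; apply: no_smaller; exists u.
Qed.

Lemma size_sub_lead_term (R : nzRingType) (P : {poly R}) : P != 0 ->
  (size (P - lead_coef P *: 'X^((size P).-1))%R < size P)%N.
Proof.
move=> Pn0; rewrite [X in (_ < X)%N](polySpred Pn0) ltnS.
apply/leq_sizeP => j hj; rewrite coefB coefZ coefXn.
case: eqP => [->|/eqP ne]; first by rewrite mulr1 subrr.
have le_Pj : (size P <= j)%N by rewrite (polySpred Pn0) ltn_neqAle eq_sym ne hj.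
by rewrite mulr0 subr0; move/leq_sizeP: le_Pj => ->.
Qed.

Lemma pseudo_division (D : idomainType) (p d : {poly D}) : d != 0 ->
  exists k q r, lead_coef d ^+ k *: p = q * d + r /\ (size r < size d)%N.
Proof.
move=> dn0; exists (Pdiv.Idomain.scalp p d), (Pdiv.Idomain.divp p d).
exists (Pdiv.Idomain.modp p d).
by split; [exact: Pdiv.Idomain.divp_eq | exact: Pdiv.Idomain.ltn_modpN0].
Qed.

Section PolyPrime.
Variables (D : idomainType) (Q : {poly D} -> Prop).
Hypothesis hQ : cprime Q.

Definition const_part (d : D) : Prop := Q d%:P.

Lemma cprime_const_part : cprime const_part.
Proof. exact: (@cprime_preimage _ _ polyC Q hQ). Qed.

Definition coefs_in (P : {poly D}) : Prop := forall j, const_part P`_j.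

Lemma coefs_in_Q P : coefs_in P -> Q P.
Proof.
move=> hP; rewrite -[P]coefK poly_def; apply: (cp_sum hQ) => i _.
by rewrite -mul_polyC; apply: (cpMr hQ); apply: hP.
Qed.

Lemma coefs_inMr P R : coefs_in P -> coefs_in (P * R).
Proof.
move=> hP j; rewrite coefM; apply: (cp_sum cprime_const_part) => i _.
exact: (cpMr cprime_const_part).
Qed.

Lemma coefs_inD P R : coefs_in P -> coefs_in R -> coefs_in (P + R).
Proof. by move=> hP hR j; rewrite coefD; apply: (cpD cprime_const_part). Qed.

Lemma coefs_inZX a k : const_part a -> coefs_in (a *: 'X^k).
Proof.
move=> ha j; rewrite coefZ coefXn; case: (j == k); rewrite ?mulr1 ?mulr0 //.
exact: (cp0 cprime_const_part).
Qed.

Lemma map_coefs_in (K : nzRingType) (phi : {rmorphism D -> K}) P :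
  (forall e, const_part e -> phi e = 0) -> coefs_in P -> map_poly phi P = 0.
Proof. by move=> phiQ hP; apply/polyP => j; rewrite coef_map coef0; apply: phiQ. Qed.

Section MinimalGenerator.
Variable h : {poly D}.
Hypotheses (Qh : Q h) (h_out : ~ coefs_in h)
  (h_min : forall P, Q P -> (size P < size h)%N -> coefs_in P).

Lemma min_gen_neq0 : h != 0.
Proof.
apply/eqP => h0; apply: h_out => j; rewrite h0 coef0.
exact: (cp0 cprime_const_part).
Qed.

(* otherwise h minus its leading term would be a smaller element of Q *)
Lemma lead_coef_min_gen : ~ const_part (lead_coef h).
Proof.
move=> Qlc; apply: h_out.
have mono_in := coefs_inZX ((size h).-1) Qlc.
rewrite -(subrK (lead_coef h *: 'X^((size h).-1)) h); apply: coefs_inD => //.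
exact: (h_min (cpB hQ Qh (coefs_in_Q mono_in)) (size_sub_lead_term min_gen_neq0)).
Qed.

Lemma size_min_gen : (1 < size h)%N.
Proof.
rewrite ltnNge; apply/negP => /size1_polyC hC; apply: lead_coef_min_gen.
by rewrite hC lead_coefC /const_part -hC.
Qed.

(* An evaluation killing Q ∩ D but not the leading coefficient of h, taken
   at a root of h, kills all of Q: pseudo-divide by h. *)
Lemma min_gen_vanish (K : idomainType) (phi : {rmorphism D -> K}) (c : K) :
  (forall e, const_part e -> phi e = 0) -> phi (lead_coef h) != 0 ->
  (map_poly phi h).[c] = 0 -> forall P, Q P -> (map_poly phi P).[c] = 0.
Proof.
move=> phiQ phi_lc hc P QP.
have [k [q [r [hdiv lt_rh]]]] := pseudo_division P min_gen_neq0.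
have Qr : Q r.
  have := cpB hQ (cpM hQ (lead_coef h ^+ k)%:P QP) (cpM hQ q Qh).
  by rewrite mul_polyC hdiv addrC addKr.
have := congr1 (fun X => (map_poly phi X).[c]) hdiv.
rewrite /= -mul_polyC rmorphD !rmorphM /= hornerD !hornerM map_polyC hornerC hc.
rewrite (map_coefs_in phiQ (h_min Qr lt_rh)) horner0 mulr0 addr0 => /eqP.
have phi_lck : phi (lead_coef h ^+ k) != 0 by rewrite rmorphXn expf_neq0.
by rewrite mulf_eq0 (negbTE phi_lck) => /eqP.
Qed.

Section AddGenerator.
Variable g : {poly D}.
Hypothesis Qg : ~ Q g.

Definition add_gen (P : {poly D}) : Prop := exists u s, Q s /\ P = u * g + s.

Lemma add_gen_g : add_gen g.
Proof. by exists 1, 0; split; [exact: (cp0 hQ) | rewrite mul1r addr0]. Qed.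

Lemma add_genM R P : add_gen P -> add_gen (R * P).
Proof.
move=> [u [s [Qs ->]]]; exists (R * u), (R * s); split; first exact: cpM.
by rewrite mulrDr mulrA.
Qed.

Lemma add_genBl M P : Q M -> add_gen P -> add_gen (M - P).
Proof.
move=> QM [u [s [Qs ->]]]; exists (- u), (M - s); split; first exact: cpB.
by ring.
Qed.

Lemma add_genBr P M : add_gen P -> Q M -> add_gen (P - M).
Proof.
move=> [u [s [Qs ->]]] QM; exists u, (s - M); split; first exact: cpB.
by rewrite addrA.
Qed.

(* p is an element of (Q + (g)) \ Q of least size; it turns out to be a
   constant. *)
Section MinimalOutside.
Variable p : {poly D}.
Hypotheses (Sp : add_gen p) (Qp : ~ Q p)
  (p_min : forall P, add_gen P -> (size P < size p)%N -> Q P).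

Lemma min_out_neq0 : p != 0.
Proof. by apply/eqP => p0; apply: Qp; rewrite p0; apply: (cp0 hQ). Qed.

Lemma lead_coef_min_out : ~ const_part (lead_coef p).
Proof.
move=> Qlc; apply: Qp.
have Qmono := coefs_in_Q (coefs_inZX ((size p).-1) Qlc).
rewrite -(subrK (lead_coef p *: 'X^((size p).-1)) p).
exact: (cpD hQ (p_min (add_genBr Sp Qmono) (size_sub_lead_term min_out_neq0)) Qmono).
Qed.

(* p cannot be of size between 2 and size h: pseudo-dividing h by p
   would put the leading coefficient of h or of p in Q ∩ D. *)
Lemma min_out_not_short : (1 < size p)%N -> (size p <= size h)%N -> False.
Proof.
move=> gt1_p le_ph.
have [k [q [r [hdiv lt_rp]]]] := pseudo_division h min_out_neq0.
have lt_rh : (size r < size h)%N := leq_trans lt_rp le_ph.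
have Qlch : Q (lead_coef p ^+ k *: h) by rewrite -mul_polyC; apply: cpM.
have Qr : Q r.
  apply: p_min lt_rp.
  by have := add_genBl Qlch (add_genM q Sp); rewrite hdiv addrC addKr.
have Qq : Q q.
  have := cpB hQ Qlch Qr; rewrite hdiv addrK.
  by case/(cpP hQ) => // /Qp.
have lt_qh : (size q < size h)%N.
  have [->|qn0] := eqVneq q 0; first by rewrite size_poly0; exact: ltnW size_min_gen.
  have le_qph : (size (q * p)%R <= size h)%N.
    have -> : q * p = lead_coef p ^+ k *: h - r by rewrite hdiv addrK.
    rewrite (leq_trans (size_polyD _ _)) // geq_max size_scale_leq size_polyN.
    exact: ltnW.
  have := size_mul qn0 min_out_neq0; lia.
have : coefs_in (lead_coef p ^+ k *: h).
  rewrite hdiv; apply: coefs_inD; first exact/coefs_inMr/h_min.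
  exact: h_min.
move/(_ (size h).-1); rewrite coefZ -lead_coefE.
case/(cpP cprime_const_part) => [/(cpX cprime_const_part)|].
  exact: lead_coef_min_out.
exact: lead_coef_min_gen.
Qed.

(* p cannot be longer than h: pseudo-divide p by h. *)
Lemma min_out_not_long : (size h < size p)%N -> False.
Proof.
move=> lt_hp.
have [k [q [r [hdiv lt_rh]]]] := pseudo_division p min_gen_neq0.
have Qr : Q r.
  apply: p_min (ltn_trans lt_rh lt_hp).
  have := add_genBr (add_genM (lead_coef h ^+ k)%:P Sp) (cpM hQ q Qh).
  by rewrite mul_polyC hdiv addrC addKr.
have := cpD hQ (cpM hQ q Qh) Qr; rewrite -hdiv -mul_polyC.
case/(cpP hQ) => [/(cpX cprime_const_part)|//].
exact: lead_coef_min_gen.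
Qed.

Lemma size_min_out : size p = 1%N.
Proof.
apply/eqP; apply: NNPP => /negP ne1.
have gt1_p : (1 < size p)%N.
  by rewrite ltn_neqAle eq_sym ne1 lt0n size_poly_eq0 min_out_neq0.
case: (leqP (size p) (size h)); [exact: min_out_not_short | exact: min_out_not_long].
Qed.

End MinimalOutside.

Lemma const_in_add_gen : exists2 r0, ~ const_part r0 & add_gen r0%:P.
Proof.
have [p [Sp Qp] p_min] := @exists_minimal _ (fun P : {poly D} => size P) (fun P => add_gen P /\ ~ Q P)
  (ex_intro _ g (conj add_gen_g Qg)).
have p_min' P : add_gen P -> (size P < size p)%N -> Q P.
  by move=> SP lt_Pp; apply: NNPP => QP; apply: (p_min P lt_Pp).
have /size_poly1P [r0 _ p_r0] : size p == 1%N by rewrite (size_min_out Sp Qp p_min').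
by exists r0; rewrite /const_part -p_r0.
Qed.

End AddGenerator.
End MinimalGenerator.
End PolyPrime.

(* For
   polynomial rings over an algebraically closed field this is a form of
   Hilbert's Nullstellensatz, proved below by induction on the number of
   variables. *)
Definition separating (R : comNzRingType) (K : nzRingType) (T : Type)
    (ev : T -> R -> K) : Prop :=
  forall Q, cprime Q -> forall g, ~ Q g ->
  exists t, (forall p, Q p -> ev t p = 0) /\ ev t g != 0.

Section PolySeparating.
Variables (F : closedFieldType) (D : idomainType) (T : Type).
Variable ev : T -> {rmorphism D -> F}.
Hypothesis ev_sep : separating (fun t (d : D) => ev t d).

Definition poly_ev (tc : T * F) (P : {poly D}) : F := (map_poly (ev tc.1) P).[tc.2].

(* Case Q = (Q ∩ D)[X]: separate a coefficient of g, then avoid the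
   finitely many roots of its image. *)
Lemma poly_separating_extended Q : cprime Q -> (forall P, Q P -> coefs_in Q P) ->
  forall g, ~ Q g ->
  exists tc, (forall P, Q P -> poly_ev tc P = 0) /\ poly_ev tc g != 0.
Proof.
move=> hQ Q_ext g Qg.
have [j Qgj] : exists j, ~ const_part Q g`_j.
  by apply: not_all_ex_not => /(coefs_in_Q hQ).
have [t [tQ tg]] := ev_sep (cprime_const_part hQ) Qgj.
have /closed_nonrootP [c nz] : map_poly (ev t) g != 0.
  by apply: contraNneq tg => g0; rewrite -coef_map g0 coef0.
exists (t, c); split => [P QP|]; last exact: nz.
by rewrite /poly_ev /= (map_coefs_in tQ (Q_ext P QP)) horner0.
Qed.

(* Case Q larger than (Q ∩ D)[X], with minimal generator h: evaluate at a
   root of h, over a point separating r0 * lead_coef h where r0 is a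
   constant of Q + (g) outside Q. *)
Lemma poly_separating_min Q h : cprime Q -> Q h -> ~ coefs_in Q h ->
  (forall P, Q P -> (size P < size h)%N -> coefs_in Q P) ->
  forall g, ~ Q g ->
  exists tc, (forall P, Q P -> poly_ev tc P = 0) /\ poly_ev tc g != 0.
Proof.
move=> hQ Qh h_out h_min g Qg.
have [r0 Qr0 [u [s [Qs r0E]]]] := const_in_add_gen hQ Qh h_out h_min Qg.
have Qd : ~ const_part Q (r0 * lead_coef h).
  by case/(cpP (cprime_const_part hQ)) => //; apply: lead_coef_min_gen.
have [t [tQ]] := ev_sep (cprime_const_part hQ) Qd.
rewrite rmorphM mulf_eq0 negb_or => /andP[t_r0 t_lc].
have /closed_rootP [c /rootP hc] : size (map_poly (ev t) h) != 1%N.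
  by rewrite size_map_poly_id0 // gtn_eqF // (size_min_gen hQ Qh h_out h_min).
have vanish := min_gen_vanish hQ Qh h_out h_min tQ t_lc hc.
exists (t, c); split => [P QP|]; first exact: vanish.
apply: contraNneq t_r0; rewrite /poly_ev /= => g0.
have := congr1 (fun X => (map_poly (ev t) X).[c]) r0E.
rewrite /= rmorphD rmorphM /= hornerD hornerM map_polyC hornerC.
by rewrite g0 mulr0 add0r (vanish s Qs) => ->.
Qed.

Theorem poly_separating : separating poly_ev.
Proof.
move=> Q hQ g Qg.
have [[P [QP P_out]]|Q_ext] := classic (exists P, Q P /\ ~ coefs_in Q P); last first.
  apply: poly_separating_extended => // P QP.
  by apply: NNPP => P_out; apply: Q_ext; exists P.
have [h [Qh h_out] h_min] := @exists_minimal _ (fun P : {poly D} => size P)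
  (fun P => Q P /\ ~ coefs_in Q P) (ex_intro _ P (conj QP P_out)).
apply: (poly_separating_min hQ Qh h_out) => // R QR lt_Rh.
by apply: NNPP => R_out; apply: (h_min R lt_Rh).
Qed.

End PolySeparating.

Lemma mpoly_rmorph_eq (R : comNzRingType) (k : nat) (S : nzRingType)
    (f g : {rmorphism {mpoly R[k]} -> S}) :
  (forall c, f c%:MP = g c%:MP) -> (forall i, f 'X_i = g 'X_i) ->
  forall p, f p = g p.
Proof.
move=> hC hX p; rewrite (mpolyE p) !rmorph_sum; apply: eq_bigr => m _.
rewrite -mul_mpolyC !rmorphM hC; congr (_ * _).
rewrite mpolyXE_id !rmorph_prod; apply: eq_bigr => i _.
by rewrite !rmorphXn hX.
Qed.

(* R[X_0..X_n] is viewed as R[X_0..X_(n-1)][X_n] through muni. *)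
Section LastVariable.
Variables (R : comNzRingType) (n : nat).

Lemma lift_max_widen (j : 'I_n) : lift ord_max j = widen_ord (leqnSn n) j.
Proof. by apply/val_inj; rewrite /= /bump leqNgt ltn_ord. Qed.

Lemma muniX_lift (j : 'I_n) :
  muni ('X_(lift ord_max j) : {mpoly R[n.+1]}) = ('X_j)%:P.
Proof.
rewrite lift_max_widen /muni mmapX mmap1U /=.
case: splitP => [k /= eq_jk|k /=]; first by congr ('X__)%:P; apply/val_inj.
by rewrite ord1 addn0 => /eqP; rewrite ltn_eqF.
Qed.

Lemma muniX_max : muni ('X_ord_max : {mpoly R[n.+1]}) = 'X.
Proof.
rewrite /muni mmapX mmap1U /=.
case: splitP => //; case=> j lt_jn /eqP /=.
by have := lt_jn; rewrite ltn_neqAle eq_sym => /andP[/negbTE ->].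
Qed.

Definition muni_inv : {rmorphism {poly {mpoly R[n]}} -> {mpoly R[n.+1]}} :=
  horner_eval 'X_ord_max \o map_poly (@mwiden n R).

Lemma muniK : cancel (@muni n R) muni_inv.
Proof.
have := @mpoly_rmorph_eq R n.+1 _ (muni_inv \o (@muni n R)) idfun.
apply => [c|i] /=; first by rewrite muniC map_polyC /= horner_evalE hornerC mwidenC.
case: (unliftP ord_max i) => [j ->|->]; last first.
  by rewrite muniX_max map_polyX horner_evalE hornerX.
rewrite muniX_lift map_polyC horner_evalE hornerC /= mwidenX mnmwiden1.
by rewrite lift_max_widen.
Qed.

Definition ext_point (t : 'I_n -> R) (c : R) (i : 'I_n.+1) : R :=
  if unlift ord_max i is Some j then t j else c.

Lemma meval_muni t c (p : {mpoly R[n.+1]}) :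
  p.@[ext_point t c] = (map_poly (meval t) (muni p)).[c].
Proof.
have := @mpoly_rmorph_eq R n.+1 _ (meval (ext_point t c))
  ((horner_eval c \o map_poly (meval t)) \o (@muni n R)).
apply => [a|i] /=; first by rewrite muniC map_polyC /= horner_evalE hornerC !mevalC.
rewrite mevalXU /ext_point; case: (unliftP ord_max i) => [j ->|->].
  by rewrite muniX_lift map_polyC horner_evalE hornerC; exact/esym/mevalXU.
by rewrite muniX_max map_polyX horner_evalE hornerX.
Qed.

End LastVariable.
Arguments muni_inv {R n}.

(* Over a field, polynomials in no variable are constants. *)
Lemma mpoly0_separating (F : fieldType) :
  separating (fun (a : 'I_0 -> F) (p : {mpoly F[0]}) => p.@[a]).
Proof.
move=> Q hQ g Qg; pose a : 'I_0 -> F := fun=> 0.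
have constE (p : {mpoly F[0]}) : p = (p.@[a])%:MP.
  by rewrite [in RHS](nvar0_mpolyC p) mevalC -nvar0_mpolyC.
exists a; split => [p Qp|]; last first.
  by apply/eqP => g0; apply: Qg; rewrite [g]constE g0 mpolyC0; apply: (cp0 hQ).
apply/eqP; apply: contraT => p_nz; exfalso; apply: Qg.
have -> : g = (g.@[a] / p.@[a])%:MP * p.
  by rewrite {2}[p]constE -rmorphM /= mulfVK // -constE.
exact: (cpM hQ).
Qed.

(* The Nullstellensatz: the evaluations at points of F^n separate the prime
   ideals of F[X_1..X_n]. *)
Theorem mpoly_separating (F : closedFieldType) (n : nat) :
  separating (fun (a : 'I_n -> F) (p : {mpoly F[n]}) => p.@[a]).
Proof.
elim: n => [|n IHn] Q hQ g Qg; first exact: mpoly0_separating.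
have Qg' : ~ Q (muni_inv (muni g)) by rewrite muniK.
have [[t c] [vanish g_nz]] := @poly_separating F _ _ (fun a => meval a) IHn _
  (cprime_preimage muni_inv hQ) _ Qg'.
exists (ext_point t c); split => [p Qp|]; rewrite meval_muni; last exact: g_nz.
by apply: vanish; rewrite muniK.
Qed.

Section TwoSidedIdeals.
Variables (A : nzRingType) (P : A -> Prop).
Hypothesis hP : two_sided_ideal P.

Lemma ts0 : P 0. Proof. by case: hP. Qed.
Lemma tsB a b : P a -> P b -> P (a - b). Proof. by case: hP => _ h _ _; apply: h. Qed.
Lemma tsM r a : P a -> P (r * a). Proof. by case: hP => _ _ h _; apply: h. Qed.
Lemma tsMr r a : P a -> P (a * r). Proof. by case: hP => _ _ _ h; apply: h. Qed.

Lemma tsD a b : P a -> P b -> P (a + b).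
Proof.
move=> ha hb; rewrite -[b]opprK -[- b]sub0r.
by apply: tsB => //; apply: tsB => //; apply: ts0.
Qed.

Lemma ts_sum (I : Type) (s : seq I) (Pr : pred I) (f : I -> A) :
  (forall i, Pr i -> P (f i)) -> P (\sum_(i <- s | Pr i) f i).
Proof. by move=> h; apply: big_ind => //; [apply: ts0 | apply: tsD]. Qed.

Lemma tsMcong a b c d : P (a - b) -> P (c - d) -> P (a * c - b * d).
Proof.
move=> h1 h2; have -> : a * c - b * d = (a - b) * c + b * (c - d).
  by rewrite mulrBl mulrBr addrA subrK.
by apply: tsD; [apply: tsMr | apply: tsM].
Qed.

End TwoSidedIdeals.

Lemma gen_ideal_ts (A : nzRingType) (S : A -> Prop) : two_sided_ideal (gen_ideal S).
Proof.
split.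
- by move=> Q hQ _; apply: (ts0 hQ).
- by move=> a b ha hb Q hQ hS; apply: (tsB hQ); [apply: ha | apply: hb].
- by move=> r a ha Q hQ hS; apply: (tsM hQ); apply: ha.
- by move=> r a ha Q hQ hS; apply: (tsMr hQ); apply: ha.
Qed.

Lemma radical_ts (A : nzRingType) (I : A -> Prop) : two_sided_ideal (radical I).
Proof.
split.
- by move=> Q [hQ _ _] _; apply: (ts0 hQ).
- by move=> a b ha hb Q [hQ ? ?] hS; apply: (tsB hQ); [apply: ha | apply: hb].
- by move=> r a ha Q [hQ ? ?] hS; apply: (tsM hQ); apply: ha.
- by move=> r a ha Q [hQ ? ?] hS; apply: (tsMr hQ); apply: ha.
Qed.

(* A proper ideal modulo which every element is congruent to a scalar is
   prime, A / P being then the field F. *)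
Lemma scalar_residue_prime (F : fieldType) (A : nzRingType)
    (iota : {rmorphism F -> A}) (P : A -> Prop) :
  two_sided_ideal P -> ~ (forall a, P a) ->
  (forall b, exists c, P (b - iota c)) -> prime_ideal P.
Proof.
move=> hP proper residue; split => // L K hL hK hLK.
have [L_sub|L_nsub] := classic (Defs.subsetP L P); [by left | right].
have [l [Ll Pl]] : exists l, L l /\ ~ P l.
  apply: NNPP => none; apply: L_nsub => a La.
  by apply: NNPP => Pa; apply: none; exists a.
move=> k Kk.
have Plk : P (l * k).
  apply: hLK; exists [:: (l, k)]; split; last by rewrite big_seq1.
  by move=> u; rewrite inE => /eqP ->.
have [c Plc] := residue l.
have c_nz : c != 0 by apply/eqP => c0; apply: Pl; move: Plc; rewrite c0 rmorph0 subr0.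
have Pck : P (iota c * k).
  by have := tsB hP Plk (tsMr hP k Plc); rewrite mulrBl opprB addrC subrK.
by have := tsM hP (iota c^-1) Pck; rewrite mulrA -rmorphM mulVf // rmorph1 mul1r.
Qed.

Section PointIdeals.
Variables (F : fieldType) (A : nzRingType) (n : nat).
Variables (iota : {rmorphism F -> A}) (x : 'I_n -> A).
Hypothesis lin_mon_surj : forall b : A, exists p : {mpoly F[n]}, b = lin_mon iota x p.

(* Modulo <Z>, the element p(x_1..x_n) is congruent to the scalar p(Z). *)
Lemma point_residue (z : 'I_n -> F) (b : A) :
  exists c : F, point_ideal iota x z (b - iota c).
Proof.
have hP := gen_ideal_ts (fun a => exists i, a = x i - iota (z i)).
have [p ->] := lin_mon_surj b; exists p.@[z].
rewrite /lin_mon /mmap mevalE rmorph_sum /= -sumrB.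
apply: (ts_sum hP) => m _; rewrite rmorphM /= -mulrBr; apply: (tsM hP).
rewrite /mmap1 rmorph_prod /=.
apply: (big_ind2 (fun u v => point_ideal iota x z (u - v))).
- by rewrite subrr; apply: (ts0 hP).
- by move=> ? ? ? ? h1 h2; apply: (tsMcong hP).
move=> i _; rewrite rmorphXn.
elim: (m i) => [|k IH]; first by rewrite !expr0 subrr; apply: (ts0 hP).
rewrite !exprS; apply: (tsMcong hP) => //.
by move=> Q hQ hS; apply: hS; exists i.
Qed.

Lemma point_ideal_cases (z : 'I_n -> F) :
  (forall a, point_ideal iota x z a) \/ prime_ideal (point_ideal iota x z).
Proof.
have [//|proper] := classic (forall a, point_ideal iota x z a); [by left | right].
exact: (scalar_residue_prime (gen_ideal_ts _) proper (point_residue z)).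
Qed.

End PointIdeals.

Lemma left_ideal_principal (A : nzRingType) (a : A) :
  left_ideal (fun w => exists r, w = r * a).
Proof.
split; first by exists 0; rewrite mul0r.
  by move=> w1 w2 [r1 ->] [r2 ->]; exists (r1 - r2); rewrite mulrBl.
by move=> s w [r ->]; exists (s * r); rewrite mulrA.
Qed.

(* For a prime ideal, a product with a central factor u behaves as in the
   commutative case: compare the left ideals Au and Av. *)
Lemma prime_central_factor (A : nzRingType) (P : A -> Prop) (u v : A) :
  prime_ideal P -> center u -> P (u * v) -> P u \/ P v.
Proof.
move=> [hP _ hprime] cu Puv.
have prod_sub : Defs.subsetP (ideal_prod (fun w => exists r, w = r * u)
                                         (fun w => exists r, w = r * v)) P.
  move=> w [s [hs ->]]; rewrite big_seq; apply: (ts_sum hP) => -[a b].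
  move=> /hs /= [[r1 ->] [r2 ->]].
  have -> : r1 * u * (r2 * v) = (r1 * r2) * (u * v).
    by rewrite -mulrA [u * _]mulrA cu !mulrA -mulrA.
  exact: (tsM hP).
have := hprime _ _ (left_ideal_principal u) (left_ideal_principal v) prod_sub.
by case=> sub; [left | right]; apply: sub; exists 1; rewrite mul1r.
Qed.

Section CentralPolynomials.
Variables (R : comNzRingType) (A : nzRingType) (n : nat).
Variables (iota : {rmorphism R -> A}) (y : 'I_n -> A).
Hypothesis y_central : forall p : {mpoly R[n]}, center (mmap iota y p).

Lemma mmap_centralM : {morph mmap iota y : u v / u * v}.
Proof.
have mon_central m : center (mmap1 y m) by rewrite -(mmapX _ iota).
apply: (commr_mmap_is_multiplicative _ _).1 => [i r|p m m'].
  by rewrite /GRing.comm; have := mon_central U_(i)%MM; rewrite mmap1U => ->.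
by rewrite /GRing.comm mon_central.
Qed.

Lemma contraction_cprime (P : A -> Prop) :
  prime_ideal P -> cprime (fun p => P (mmap iota y p)).
Proof.
move=> hPr; have [hP _ _] := hPr; split.
- by rewrite mmap0; apply: (ts0 hP).
- by move=> u v Pu Pv; rewrite mmapB; apply: (tsB hP).
- by move=> r u Pu; rewrite mmap_centralM; apply: (tsM hP).
- by move=> u v; rewrite mmap_centralM; apply: prime_central_factor.
Qed.

End CentralPolynomials.

Theorem theorem3p13 (F : closedFieldType) (A : nzRingType) (n : nat)
    (iota : {rmorphism F -> A}) (x : 'I_n -> A) (y : 'I_n -> A)
    (hA : qc_bijective_skewPBW iota x)
    (* Z(A) = F[y_1,...,y_n] with y_1..y_n algebraically independent:
       p |-> p(y_1,...,y_n) is injective with image exactly the center *)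
    (hy_indep : injective (mmap iota y : {mpoly F[n]} -> A))
    (hy_center : forall a : A, center a <-> exists p : {mpoly F[n]}, a = mmap iota y p)
    (I : A -> Prop) (hI : two_sided_ideal I) :
  let J := fun p : {mpoly F[n]} => I (mmap iota y p) in
  (forall a, gen_ideal
       (fun b => exists2 g, I_Z (V_Z J) g & b = mmap iota y g) a ->
     radical I a) /\
  (forall a, radical I a -> I_A iota x (V_A iota x I) a).
Proof.
move=> J; split; last first.
  (* sqrt I ⊆ I(V(I)): the ideal of a point of V(I) is A or a prime over I *)
  case: hA => _ [lm_inv _ lmK] _ _ _.
  have surj b : exists p, b = lin_mon iota x p by exists (lm_inv b); rewrite lmK.
  move=> a rad_a z Vz; have [//|z_prime] := point_ideal_cases surj z.
  by apply: rad_a => // b Ib; apply: Vz.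
(* <I_Z(V_Z(J))> ⊆ sqrt I: test each generator against each prime P ⊇ I,
   through the Nullstellensatz for the contraction of P to Z(A) *)
move=> a gen_a; apply: gen_a; first exact: radical_ts.
move=> _ [g g_van ->] P P_prime IP.
have y_central p : center (mmap iota y p) by apply/hy_center; exists p.
apply: NNPP => Pg.
have [z [z_van gz]] := mpoly_separating (contraction_cprime y_central P_prime) Pg.
by move: gz; rewrite (g_van z) ?eqxx // => p Jp; apply/z_van/IP.
Qed.
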